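(* Let $A\in\mathbb{C}^{n\times n}$ with $\mathrm{Ind}(A)=k$ be written in the core-EP decomposition $A=U\begin{bmatrix}T&S\\0&N\end{bmatrix}U^*$ (as in the context), and let $m\in\mathbb{N}=\{1,2,\dots\}$. For $\ell\in\mathbb{N}$ put $\tilde{T}_\ell=\sum_{i=0}^{\ell-1}T^iSN^{\ell-1-i}$. Then: (a) $A^{\#_m}=A^\dagger$ if and only if $S=0$ and $N=0$; (b) $A^{\#_m}=A^d$ if and only if $\tilde{T}_mP_{N^m}=T^{m-k}\tilde{T}_k$; (c) $A^{\#_m}=A^{\mathrm{cEP}}$ if and only if $\tilde{T}_mN^m=0$; (d) $A^{\#_m}=A^{d,\dagger}$ if and only if $\tilde{T}_mP_{N^m}=T^{m-k}\tilde{T}_kP_N$; (e) $A^{\#_m}=A^{\mathrm{WC}}$ if and only if $\tilde{T}_mP_{N^m}=T^{m-1}SP_N$; (f) $A^{\#_m}=A^{\mathrm{WG}_m}$ if and only if $\mathcal{N}((N^m)^* )\subseteq\mathcal{N}(\tilde{T}_m)$.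
   Context: Core-EP decomposition: every $A\in\mathbb{C}^{n\times n}$ of index $k$ can be written as $A=U\begin{bmatrix}T&S\\0&N\end{bmatrix}U^*$ with $U$ unitary, $T\in\mathbb{C}^{t\times t}$ nonsingular, $t=\mathrm{rk}(A^k)$, and $N\in\mathbb{C}^{(n-t)\times(n-t)}$ nilpotent of index $k$ (blocks of size zero allowed). The index $\mathrm{Ind}(A)$ is the smallest nonnegative integer $k$ with $\mathcal{R}(A^k)=\mathcal{R}(A^{k+1})$, $A^0=I$. For a matrix $B$: $B^\dagger$ Moore–Penrose inverse, $P_B=BB^\dagger$, $\mathcal{R}(\cdot)$, $\mathcal{N}(\cdot)$ column space and null space. $A^d$ is the Drazin inverse (unique $X$ with $XAX=X$, $AX=XA$, $XA^{k+1}=A^k$). The DMP inverse is $A^{d,\dagger}:=A^dAA^\dagger$. The core-EP inverse $A^{\mathrm{cEP}}$ is the unique $X$ with $XAX=X$ and $\mathcal{R}(X)=\mathcal{R}(X^* )=\mathcal{R}(A^k)$. The WG inverse is $A^{\mathrm{WG}}:=(A^{\mathrm{cEP}})^2A$ and the WC inverse is $A^{\mathrm{WC}}:=A^{\mathrm{WG}}P_A$. For $m\in\mathbb{N}$, the $m$-weak group inverse is $A^{\mathrm{WG}_m}:=(A^{\mathrm{cEP}})^{m+1}A^m$ and the $m$-weak core inverse is $A^{\#_m}:=A^{\mathrm{WG}_m}P_{A^m}$. *)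

From HB Require Import structures.
From mathcomp Require Import all_boot all_order all_algebra all_field.
From mathcomp Require Import spectral.
From Stdlib Require Import ClassicalEpsilon.

Set Implicit Arguments.
Unset Strict Implicit.
Unset Printing Implicit Defensive.

Import Order.TTheory GRing.Theory Num.Theory.
Local Open Scope ring_scope.
Local Open Scope sesquilinear_scope.


(* Column space of B : 'M_(p,q) is the row space of B^T. *)
Definition colsp_eq p q r (B : 'M[algC]_(p, q)) (C : 'M[algC]_(p, r)) : Prop :=
  (B^T == C^T)%MS.

Definition is_index n (A : 'M[algC]_n) (k : nat) : Prop :=
  colsp_eq (A ^+ k) (A ^+ k.+1) /\
  forall j, (j < k)%N -> ~ colsp_eq (A ^+ j) (A ^+ j.+1).

Definition mxindex n (A : 'M[algC]_n) : nat :=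
  epsilon (inhabits 0%N) (is_index A).

Definition nilp_index n (N : 'M[algC]_n) (k : nat) : Prop :=
  N ^+ k = 0 /\ forall j, (j < k)%N -> N ^+ j <> 0.

Definition is_mpinv p q (A : 'M[algC]_(p, q)) (X : 'M[algC]_(q, p)) : Prop :=
  [/\ A *m X *m A = A, X *m A *m X = X,
      (A *m X) ^t* = A *m X & (X *m A) ^t* = X *m A].

Definition mpinv p q (A : 'M[algC]_(p, q)) : 'M[algC]_(q, p) :=
  epsilon (inhabits 0) (is_mpinv A).

Definition projP p q (B : 'M[algC]_(p, q)) : 'M[algC]_p := B *m mpinv B.

Definition is_drazin n (A X : 'M[algC]_n) : Prop :=
  [/\ X *m A *m X = X, A *m X = X *m A & X *m A ^+ (mxindex A).+1 = A ^+ (mxindex A)].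

Definition drazin n (A : 'M[algC]_n) : 'M[algC]_n :=
  epsilon (inhabits 0) (is_drazin A).

Definition is_coreEP n (A X : 'M[algC]_n) : Prop :=
  [/\ X *m A *m X = X, colsp_eq X (A ^+ mxindex A) & colsp_eq (X ^t*) (A ^+ mxindex A)].

Definition coreEP n (A : 'M[algC]_n) : 'M[algC]_n :=
  epsilon (inhabits 0) (is_coreEP A).

Definition dmp n (A : 'M[algC]_n) : 'M[algC]_n := drazin A *m A *m mpinv A.

Definition wg n (A : 'M[algC]_n) : 'M[algC]_n := coreEP A ^+ 2 *m A.
Definition wc n (A : 'M[algC]_n) : 'M[algC]_n := wg A *m projP A.

Definition wgm n (m : nat) (A : 'M[algC]_n) : 'M[algC]_n :=
  coreEP A ^+ m.+1 *m A ^+ m.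
Definition wcm n (m : nat) (A : 'M[algC]_n) : 'M[algC]_n :=
  wgm m A *m projP (A ^+ m).

Definition Ttil t s (T : 'M[algC]_t) (S : 'M[algC]_(t, s)) (N : 'M[algC]_s)
  (l : nat) : 'M[algC]_(t, s) :=
  \sum_(i < l) T ^+ i *m S *m N ^+ (l.-1 - i).

(* Integer power T^(m-k) of a nonsingular T. *)
Definition mxpowz t (T : 'M[algC]_t) (m k : nat) : 'M[algC]_t :=
  if (k <= m)%N then T ^+ (m - k) else invmx T ^+ (k - m).

From mathcomp Require Import all_boot all_order all_algebra all_field.
From mathcomp Require Import spectral.
From Stdlib Require Import ClassicalEpsilon.

Set Implicit Arguments.
Unset Strict Implicit.
Unset Printing Implicit Defensive.

Import GRing.Theory Num.Theory.
Local Open Scope ring_scope.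
Local Open Scope sesquilinear_scope.

(* Conjugating by the unitary U reduces everything to the block upper
   triangular matrix M = [T S; 0 N].  Its powers are M^j = [T^j, Ttil_j; 0, N^j],
   so M^k = [T^k, Ttil_k; 0, 0], and each inverse that occurs has the shape
   [T^-1, X; 0, 0]: X = 0 for the core-EP inverse, T^-(k+1) Ttil_k for the
   Drazin inverse, T^-(m+1) Ttil_m for the m-weak group inverse, and right
   multiplication by P_(A^j) = [I, 0; 0, P_(N^j)] appends P_(N^j) to X.  Since
   the inverses are defined by choice, these shapes are obtained by checking
   the defining equations and invoking uniqueness.  Each equality of inverses
   is then an equality of upper right blocks, and cancelling the invertible
   powers of T gives the stated conditions; for the Moore-Penrose inverse the
   Penrose equations force N = 0 and then S = 0. *)

Section ConjugateTranspose.
Implicit Types p q r : nat.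

Lemma trmxC_mul p q r (A : 'M[algC]_(p, q)) (B : 'M_(q, r)) :
  (A *m B)^t* = B^t* *m A^t*.
Proof. by rewrite trmx_mul map_mxM. Qed.

Lemma trmxC0 p q : (0 : 'M[algC]_(p, q))^t* = 0.
Proof. by rewrite trmx0 map_mx0. Qed.

Lemma trmxC1 p : (1%:M : 'M[algC]_p)^t* = 1%:M.
Proof. by rewrite trmx1 map_mx1. Qed.

Lemma trmxC_block p q r u (A : 'M[algC]_(p, r)) (B : 'M_(p, u))
    (C : 'M_(q, r)) (D : 'M_(q, u)) :
  (block_mx A B C D)^t* = block_mx (A^t*) (C^t*) (B^t*) (D^t*).
Proof. by rewrite tr_block_mx map_block_mx. Qed.

Lemma trmxC_inv p (A : 'M[algC]_p) : (invmx A)^t* = invmx (A^t*).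
Proof. by rewrite trmx_inv map_invmx. Qed.

Lemma mulmx_trmxC_eq0 p q (A : 'M[algC]_(p, q)) : A *m A^t* = 0 -> A = 0.
Proof.
move=> AA0; apply/eqP; rewrite -submx0 -(orthomx_ortho_disj A) sub_capmx.
by rewrite orthomx1E AA0 eqxx andbT.
Qed.

End ConjugateTranspose.

Lemma unitmx_gram p q (G : 'M[algC]_(p, q)) : row_free G -> G *m G^t* \in unitmx.
Proof.
move=> freeG; rewrite -row_free_unit -kermx_eq0; apply/eqP.
set K := kermx _; have KG0 : K *m G = 0.
  apply: mulmx_trmxC_eq0.
  by rewrite trmxC_mul !mulmxA -(mulmxA K) mulmx_ker mul0mx.
by apply/eqP; rewrite -(mulmx_free_eq0 _ freeG) KG0.
Qed.

Lemma mpinv_full_rank p r q (F : 'M[algC]_(p, r)) (G : 'M[algC]_(r, q)) :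
  row_full F -> row_free G ->
  is_mpinv (F *m G) (G^t* *m invmx (G *m G^t*) *m invmx (F^t* *m F) *m F^t*).
Proof.
move=> fullF freeG.
have unitF : F^t* *m F \in unitmx.
  by rewrite -[X in _ *m X]trmxCK unitmx_gram // /row_free mxrank_map mxrank_tr.
have unitG := unitmx_gram freeG.
have herm_inv (K : 'M[algC]_r) : K^t* = K -> (invmx K)^t* = invmx K.
  by move=> hK; rewrite trmxC_inv hK.
set KF := F^t* *m F in unitF *; set KG := G *m G^t* in unitG *.
have FGX : F *m G *m (G^t* *m invmx KG *m invmx KF *m F^t*) = F *m invmx KF *m F^t*.
  by rewrite !mulmxA -(mulmxA F G) -(mulmxA F KG) mulmxV // mulmx1.
have XFG : G^t* *m invmx KG *m invmx KF *m F^t* *m (F *m G) = G^t* *m invmx KG *m G.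
  by rewrite !mulmxA -(mulmxA _ (F^t*) F) -(mulmxA _ (invmx KF) KF) mulVmx // mulmx1.
split.
- by rewrite FGX !mulmxA -(mulmxA _ (F^t*) F) -(mulmxA F (invmx KF) KF) mulVmx // mulmx1.
- rewrite XFG !mulmxA -(mulmxA _ G (G^t*)) -(mulmxA (G^t*) (invmx KG) KG).
  by rewrite mulVmx // mulmx1.
- by rewrite FGX !trmxC_mul trmxCK herm_inv ?trmxC_mul ?trmxCK // !mulmxA.
- by rewrite XFG !trmxC_mul trmxCK herm_inv ?trmxC_mul ?trmxCK // !mulmxA.
Qed.

Lemma mpinvP p q (M : 'M[algC]_(p, q)) : is_mpinv M (mpinv M).
Proof.
apply: epsilon_spec; rewrite -[M in is_mpinv M](mulmx_base M).
by eexists; apply: mpinv_full_rank; [exact: col_base_full | exact: row_base_free].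
Qed.

Lemma mpinv_eq p q (M : 'M[algC]_(p, q)) X : is_mpinv M X -> mpinv M = X.
Proof.
case: (mpinvP M) => [M1 M2 M3 M4] [X1 X2 X3 X4]; set Y := mpinv M in M1 M2 M3 M4 *.
have XMY_X : X *m M *m Y = X.
  have MX_MY : (M *m X)^t* *m (M *m Y)^t* = (M *m X)^t*.
    by rewrite -trmxC_mul mulmxA M1.
  transitivity (X *m (M *m X)^t* *m (M *m Y)^t*); first by rewrite X3 M3 !mulmxA X2.
  by rewrite -mulmxA MX_MY X3 mulmxA X2.
have XMY_Y : X *m M *m Y = Y.
  have XM_YM : (X *m M)^t* *m (Y *m M)^t* = (Y *m M)^t*.
    by rewrite -trmxC_mul -mulmxA (mulmxA M X M) X1.
  transitivity ((X *m M)^t* *m (Y *m M)^t* *m Y).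
    by rewrite X4 M4 -!mulmxA (mulmxA Y M Y) M2.
  by rewrite XM_YM M4 M2.
by rewrite -XMY_Y.
Qed.

Lemma trmxC_projP p q (M : 'M[algC]_(p, q)) : (projP M)^t* = projP M.
Proof. by case: (mpinvP M). Qed.

Lemma mul_projP p q (M : 'M[algC]_(p, q)) : projP M *m M = M.
Proof. by case: (mpinvP M). Qed.

Lemma projP_eq p q (M : 'M[algC]_(p, q)) (P : 'M_p) (Z : 'M_(q, p)) :
  P^t* = P -> P *m M = M -> P = M *m Z -> projP M = P.
Proof.
move=> hermP PM defP.
have P_projP : projP M *m P = P by rewrite {1}defP mulmxA mul_projP -defP.
have projP_P : P *m projP M = projP M by rewrite /projP mulmxA PM.
by rewrite -projP_P -{1}hermP -trmxC_projP -trmxC_mul P_projP hermP.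
Qed.

Lemma mulmx_projP_eq0 r p q (X : 'M[algC]_(r, p)) (M : 'M[algC]_(p, q)) :
  X *m projP M = 0 <-> X *m M = 0.
Proof.
split=> [XP | XM]; first by rewrite -(mul_projP M) mulmxA XP mul0mx.
by rewrite /projP mulmxA XM mul0mx.
Qed.

Lemma mulmx_projP_id r p q (X : 'M[algC]_(r, p)) (M : 'M[algC]_(p, q)) :
  X *m projP M = X <-> (forall x : 'cV_p, M^t* *m x = 0 -> X *m x = 0).
Proof.
split=> [XP x Mx0 | kerX].
  by rewrite -XP -mulmxA -trmxC_projP /projP trmxC_mul -mulmxA Mx0 !mulmx0.
have M_compl : M^t* *m (1%:M - projP M) = 0.
  by rewrite mulmxBr mulmx1 -{1}trmxC_projP -trmxC_mul mul_projP subrr.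
apply/eqP; rewrite eq_sym -subr_eq0 -{1}(mulmx1 X) -mulmxBr; apply/eqP.
apply/matrixP => i j; have := kerX (col j (1%:M - projP M)).
rewrite !colE (mulmxA (M^t*)) M_compl mul0mx mulmxA -colE => /(_ erefl)/colP/(_ i).
by rewrite !mxE.
Qed.

Section ColumnSpace.
Implicit Types p q r u : nat.

Lemma colsp_eq_mul p q r (B : 'M[algC]_(p, q)) (C : 'M_(p, r)) Z W :
  B = C *m Z -> C = B *m W -> colsp_eq B C.
Proof.
move=> defB defC; apply/andP; split; first by rewrite defB trmx_mul submxMl.
by rewrite defC trmx_mul submxMl.
Qed.

Lemma colsp_eq_factor p q r (B : 'M[algC]_(p, q)) (C : 'M_(p, r)) :
  colsp_eq B C -> exists Z, B = C *m Z.
Proof.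
case/andP=> /submxP[D defB] _.
by exists D^T; rewrite -[B]trmxK defB trmx_mul trmxK.
Qed.

Lemma colsp_eq_sym p q r (B : 'M[algC]_(p, q)) (C : 'M_(p, r)) :
  colsp_eq B C -> colsp_eq C B.
Proof. by move=> /eqmxP BC; apply/eqmxP; exact: eqmx_sym. Qed.

Lemma colsp_eq_trans p q r u (B : 'M[algC]_(p, q)) (C : 'M_(p, r)) (D : 'M_(p, u)) :
  colsp_eq B C -> colsp_eq C D -> colsp_eq B D.
Proof. by move=> /eqmxP BC /eqmxP CD; apply/eqmxP; exact: eqmx_trans BC CD. Qed.

End ColumnSpace.

Lemma coreEP_eq n (A X : 'M[algC]_n) : is_coreEP A X -> coreEP A = X.
Proof.
move=> coreX; have := epsilon_spec (inhabits 0) (is_coreEP A) (ex_intro _ X coreX).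
rewrite -/(coreEP A); set Y := coreEP A.
case=> YAY RY RYt; case: coreX => XAX RX RXt.
have [Z defY] := colsp_eq_factor (colsp_eq_trans RY (colsp_eq_sym RX)).
have [W defXt] := colsp_eq_factor (colsp_eq_trans RXt (colsp_eq_sym RYt)).
have defX : X = W^t* *m Y by rewrite -[X]trmxCK defXt trmxC_mul trmxCK.
have XAY_Y : X *m A *m Y = Y by rewrite {1}defY mulmxA XAX -defY.
have XAY_X : X *m A *m Y = X by rewrite {1}defX -!mulmxA (mulmxA Y A Y) YAY -defX.
by rewrite -XAY_X.
Qed.

Lemma drazin_uniq (R : pzRingType) (a x y : R) k :
  x * a * x = x -> a * x = x * a -> x * a ^+ k.+1 = a ^+ k ->
  y * a * y = y -> a * y = y * a -> y * a ^+ k.+1 = a ^+ k -> x = y.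
Proof.
have powE z : z * a * z = z -> a * z = z * a -> forall j, z = z ^+ j.+1 * a ^+ j.
  move=> zaz az; elim=> [|j IHj]; first by rewrite expr0 expr1 mulr1.
  have zza : z * z * a = z by rewrite -mulrA -az mulrA zaz.
  transitivity (z ^+ j * (z * z * a) * a ^+ j); first by rewrite zza -exprSr -IHj.
  by rewrite [z ^+ j.+2]exprSr [z ^+ j.+1]exprSr exprS !mulrA.
move=> xax ax xak yay ay yak.
have xa : x ^+ k.+1 * a ^+ k.+1 = x * a.
  by rewrite [a ^+ k.+1]exprSr mulrA -(powE x xax ax k).
have cyk : GRing.comm (a ^+ k) (y ^+ k.+1) := commrX k.+1 (commr_sym (commrX k (esym ay))).
have xy : x = x * a * y.
  by rewrite {1}(powE x xax ax k) -yak (commrX k.+1 (esym ay)) mulrA xa.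
have yx : y = x * a * y.
  rewrite {1}(powE y yay ay k) -cyk -xak [a ^+ k.+1]exprS mulrA -(mulrA (x * a)).
  by rewrite cyk -(powE y yay ay k).
by rewrite xy -yx.
Qed.

Lemma drazin_eq n (A X : 'M[algC]_n) : is_drazin A X -> drazin A = X.
Proof.
move=> drX; have := epsilon_spec (inhabits 0) (is_drazin A) (ex_intro _ X drX).
rewrite -/(drazin A); case=> D1 D2 D3; case: drX => X1 X2 X3.
exact: (drazin_uniq D1 D2 D3 X1 X2 X3).
Qed.

Lemma mxindex_eq n (A : 'M[algC]_n) k : is_index A k -> mxindex A = k.
Proof.
move=> idxk; have [Rk minK] := idxk.
have [RA minA] := epsilon_spec (inhabits 0%N) (is_index A) (ex_intro _ k idxk).
rewrite -/(mxindex A) in RA minA *.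
by case: (ltngtP (mxindex A) k) => // [/minK | /minA].
Qed.

Section UnitaryConjugation.
Variables (n1 n2 : nat) (U : 'M[algC]_(n1 + n2)).
Hypothesis unitary_U : U \is unitarymx.
Local Notation cU := (conjmx U).

Let unit_U : U \in unitmx. Proof. exact: unitarymx_unit. Qed.

Lemma conjmx_mul X Y : cU (X *m Y) = cU X *m cU Y.
Proof. exact: conjmxM (stablemx_unit _ unit_U) (stablemx_unit _ unit_U). Qed.

Lemma conjmx_expr X j : cU (X ^+ j) = cU X ^+ j.
Proof.
elim: j => [|j IHj]; first by rewrite !expr0 conjmx_scalar ?row_free_unit.
by rewrite !exprS -!mulmxE conjmx_mul IHj.
Qed.

Lemma conjmx_inj : injective cU.
Proof. by move=> X Y /(congr1 (conjmx (invmx U))); rewrite !conjmxK. Qed.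

Lemma trmxC_conjmx X : (cU X)^t* = cU (X^t*).
Proof. by rewrite !conjymx // !trmxC_mul trmxCK mulmxA. Qed.

Lemma projP_conjmx X : projP (cU X) = cU (projP X).
Proof.
apply: (projP_eq (Z := cU (mpinv X))); first by rewrite trmxC_conjmx trmxC_projP.
  by rewrite -conjmx_mul mul_projP.
by rewrite -conjmx_mul.
Qed.

Lemma colsp_eq_conjmx_block (P : 'M[algC]_n1) (Q : 'M_(n1, n2)) :
  P \in unitmx -> colsp_eq (cU (block_mx P Q 0 0)) (cU (block_mx 1%:M 0 0 0)).
Proof.
move=> unit_P; apply: (colsp_eq_mul (Z := cU (block_mx P Q 0 0))
                                    (W := cU (block_mx (invmx P) 0 0 0))).
  by rewrite -conjmx_mul mulmx_block !(mul0mx, mulmx0, add0r, addr0) !mul1mx.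
by rewrite -conjmx_mul mulmx_block !(mul0mx, mulmx0, add0r, addr0) mulmxV.
Qed.

End UnitaryConjugation.

Section BlockTriangularPowers.
Variables (t s : nat) (T : 'M[algC]_t) (S : 'M[algC]_(t, s)) (N : 'M[algC]_s).

Lemma Ttil0 : Ttil T S N 0 = 0.
Proof. by rewrite /Ttil big_ord0. Qed.

Lemma TtilS j : Ttil T S N j.+1 = T *m Ttil T S N j + S *m N ^+ j.
Proof.
rewrite /Ttil big_ord_recl /= expr0 mul1mx subn0 addrC mulmx_sumr; congr (_ + _).
apply: eq_bigr => i _; rewrite exprS -mulmxE !mulmxA.
by rewrite /bump /= add1n subnS predn_sub.
Qed.

Lemma expr_block_triu j :
  block_mx T S 0 N ^+ j = block_mx (T ^+ j) (Ttil T S N j) 0 (N ^+ j).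
Proof.
elim: j => [|j IHj]; first by rewrite !expr0 Ttil0 -scalar_mx_block.
rewrite exprS -mulmxE IHj mulmx_block TtilS !(mul0mx, mulmx0, add0r, addr0).
by rewrite !exprS -!mulmxE.
Qed.

Lemma Ttil_comm j :
  T *m Ttil T S N j + S *m N ^+ j = T ^+ j *m S + Ttil T S N j *m N.
Proof.
have := exprS (block_mx T S 0 N) j; rewrite exprSr !expr_block_triu -!mulmxE.
by rewrite !mulmx_block !(mul0mx, mulmx0, add0r, addr0) => /eq_block_mx[].
Qed.

Lemma Ttil1 : Ttil T S N 1 = S.
Proof. by rewrite TtilS Ttil0 mulmx0 add0r expr0 mulmx1. Qed.

End BlockTriangularPowers.

Lemma Ttil_S0 t s (T : 'M[algC]_t) (N : 'M[algC]_s) j : Ttil T 0 N j = 0.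
Proof. by rewrite /Ttil big1 // => i _; rewrite mulmx0 mul0mx. Qed.

Section InvertiblePowers.
Variables (t : nat) (T : 'M[algC]_t).
Hypothesis unit_T : T \in unitmx.

Lemma mulmxV_expr j : T ^+ j *m invmx T ^+ j = 1%:M.
Proof.
rewrite mulmxE -exprMn_comm; last by rewrite /GRing.comm -!mulmxE mulmxV ?mulVmx.
by rewrite -mulmxE mulmxV // expr1n.
Qed.

Lemma mulVmx_expr j : invmx T ^+ j *m T ^+ j = 1%:M.
Proof. exact/mulmx1C/mulmxV_expr. Qed.

Lemma unitmx_expr j : T ^+ j \in unitmx.
Proof. by apply: (intro_unitmx (B := invmx T ^+ j)); rewrite mulmxV_expr mulVmx_expr. Qed.

Lemma mulVmx_exprS j : invmx T ^+ j.+1 *m T ^+ j = invmx T.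
Proof. by rewrite exprS -mulmxE -mulmxA mulVmx_expr mulmx1. Qed.

Lemma mul_invmx_exprI s j : injective (@mulmx _ t t s (invmx T ^+ j)).
Proof.
by move=> Z W eqZW; rewrite -[Z]mul1mx -[W]mul1mx -(mulmxV_expr j) -!mulmxA eqZW.
Qed.

Lemma mul_invmx_expr_eq0 s j (Z : 'M[algC]_(t, s)) : invmx T ^+ j *m Z = 0 <-> Z = 0.
Proof.
split=> [eqZ | ->]; last exact: mulmx0.
by apply: (@mul_invmx_exprI _ j); rewrite eqZ mulmx0.
Qed.

Lemma mxpowzE a b : mxpowz T a b = T ^+ a.+1 *m invmx T ^+ b.+1.
Proof.
rewrite /mxpowz; case: leqP => [le_ba | lt_ab].
  have -> : a.+1 = (a - b + b.+1)%N by rewrite addnS subnK.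
  by rewrite exprD -mulmxE -mulmxA mulmxV_expr mulmx1.
have -> : b.+1 = (a.+1 + (b - a))%N by rewrite addSn subnKC // ltnW.
by rewrite (exprD (invmx T)) -mulmxE mulmxA mulmxV_expr mul1mx.
Qed.

Lemma mul_invmx_expr_eq s a b (Z W : 'M[algC]_(t, s)) :
  invmx T ^+ a.+1 *m Z = invmx T ^+ b.+1 *m W <-> Z = mxpowz T a b *m W.
Proof.
rewrite mxpowzE; split=> [eqZW | ->].
  by rewrite -[Z]mul1mx -(mulmxV_expr a.+1) -mulmxA eqZW !mulmxA.
by rewrite !mulmxA mulVmx_expr mul1mx.
Qed.

End InvertiblePowers.

Lemma projP_block_triu p q (P : 'M[algC]_p) (Q : 'M_(p, q)) (R : 'M_q) :
  P \in unitmx -> projP (block_mx P Q 0 R) = block_mx 1%:M 0 0 (projP R).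
Proof.
move=> unit_P.
apply: (projP_eq (Z := block_mx (invmx P) (- (invmx P *m Q *m mpinv R)) 0 (mpinv R))).
- by rewrite trmxC_block trmxC1 !trmxC0 trmxC_projP.
- by rewrite mulmx_block !(mul0mx, mulmx0, add0r, addr0) !mul1mx mul_projP.
rewrite mulmx_block !(mul0mx, mulmx0, add0r, addr0) mulmxV // mulmxN !mulmxA.
by rewrite mulmxV // mul1mx addNr.
Qed.

Lemma wc_wcm1 n (A : 'M[algC]_n) : wc A = wcm 1 A.
Proof. by rewrite /wc /wg /wcm /wgm !expr1. Qed.

Section CoreEPDecomposition.
Variables (t s k : nat) (U A : 'M[algC]_(t + s)).
Variables (T : 'M[algC]_t) (S : 'M[algC]_(t, s)) (N : 'M[algC]_s).
Hypotheses (unitary_U : U \is unitarymx) (unit_T : T \in unitmx) (N_k : N ^+ k = 0).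
Hypotheses (index_A : mxindex A = k) (A_decomp : A = conjmx U (block_mx T S 0 N)).

Local Notation cU := (conjmx U).
Local Notation Ti := (invmx T).
Local Notation Tt := (Ttil T S N).

Lemma expr_decomp j : A ^+ j = cU (block_mx (T ^+ j) (Tt j) 0 (N ^+ j)).
Proof. by rewrite A_decomp -conjmx_expr // expr_block_triu. Qed.

Lemma eq_conjmx_block X Y : cU (block_mx Ti X 0 0) = cU (block_mx Ti Y 0 0) <-> X = Y.
Proof. by split=> [/(conjmx_inj unitary_U)/eq_block_mx[] | ->]. Qed.

Lemma outer_inv_block Y :
  cU (block_mx Ti Y 0 0) *m A *m cU (block_mx Ti Y 0 0) = cU (block_mx Ti Y 0 0).
Proof.
rewrite A_decomp -!conjmx_mul // !mulmx_block !(mul0mx, mulmx0, add0r, addr0).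
by rewrite mulVmx // !mul1mx.
Qed.

Lemma mul_block_projP Y j :
  cU (block_mx Ti Y 0 0) *m projP (A ^+ j) = cU (block_mx Ti (Y *m projP (N ^+ j)) 0 0).
Proof.
rewrite expr_decomp projP_conjmx // projP_block_triu ?unitmx_expr //.
by rewrite -conjmx_mul // mulmx_block !(mul0mx, mulmx0, add0r, addr0) mulmx1.
Qed.

Lemma coreEP_decomp : coreEP A = cU (block_mx Ti 0 0 0).
Proof.
have R_Ak : colsp_eq (A ^+ k) (cU (block_mx 1%:M 0 0 0)).
  by rewrite expr_decomp N_k; apply: colsp_eq_conjmx_block; rewrite ?unitmx_expr.
apply: coreEP_eq; rewrite /is_coreEP index_A; split; first exact: outer_inv_block.
all: apply: colsp_eq_trans (colsp_eq_sym R_Ak).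
  by apply: colsp_eq_conjmx_block; rewrite ?unitmx_inv.
rewrite trmxC_conjmx // trmxC_block !trmxC0.
by apply: colsp_eq_conjmx_block; rewrite ?map_unitmx ?unitmx_tr ?unitmx_inv.
Qed.

Lemma drazin_decomp : drazin A = cU (block_mx Ti (Ti ^+ k.+1 *m Tt k) 0 0).
Proof.
have N_k1 : N ^+ k.+1 = 0 by rewrite exprSr N_k mul0r.
apply: drazin_eq; rewrite /is_drazin index_A; split; first exact: outer_inv_block.
  rewrite A_decomp -!conjmx_mul // !mulmx_block !(mul0mx, mulmx0, add0r, addr0).
  rewrite mulmxV // mulVmx //; congr (cU (block_mx _ _ 0 0)).
  have TTt : T *m Tt k = T ^+ k *m S + Tt k *m N by rewrite -Ttil_comm N_k mulmx0 addr0.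
  have TTi : T *m Ti ^+ k.+1 = Ti ^+ k by rewrite exprS -mulmxE mulmxA mulmxV // mul1mx.
  have TiT : Ti ^+ k.+1 *m T = Ti ^+ k by rewrite exprSr -mulmxE -mulmxA mulVmx // mulmx1.
  by rewrite mulmxA TTi -TiT -mulmxA TTt mulmxDr !mulmxA mulVmx_exprS.
rewrite !expr_decomp N_k N_k1 TtilS N_k mulmx0 addr0 -conjmx_mul //.
rewrite mulmx_block !(mul0mx, mulmx0, add0r, addr0) mulmxA mulVmx // mul1mx.
by rewrite exprS -mulmxE mulmxA mulVmx // mul1mx.
Qed.

Lemma wgm_decomp m : wgm m A = cU (block_mx Ti (Ti ^+ m.+1 *m Tt m) 0 0).
Proof.
rewrite /wgm coreEP_decomp -conjmx_expr // expr_block_triu Ttil_S0 expr0n /=.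
rewrite expr_decomp -conjmx_mul // mulmx_block !(mul0mx, mulmx0, add0r, addr0).
by rewrite mulVmx_exprS.
Qed.

Lemma wcm_decomp m :
  wcm m A = cU (block_mx Ti (Ti ^+ m.+1 *m Tt m *m projP (N ^+ m)) 0 0).
Proof. by rewrite /wcm wgm_decomp mul_block_projP. Qed.

Lemma dmp_decomp : dmp A = cU (block_mx Ti (Ti ^+ k.+1 *m Tt k *m projP N) 0 0).
Proof.
by rewrite /dmp -mulmxA -/(projP A) drazin_decomp -(expr1 A) mul_block_projP expr1.
Qed.

Lemma wcm_eq_mpinv m : wcm m A = mpinv A <-> S = 0 /\ N = 0.
Proof.
split=> [eqW | [S0 N0]].
  have [A1 _ _ A4] := mpinvP A; rewrite -eqW wcm_decomp A_decomp in A1 A4.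
  move: A1; rewrite -!conjmx_mul // => /(conjmx_inj unitary_U).
  rewrite !mulmx_block !(mul0mx, mulmx0, add0r, addr0) => /eq_block_mx[_ _ _ N0].
  move: A4; rewrite -conjmx_mul // trmxC_conjmx // => /(conjmx_inj unitary_U).
  rewrite mulmx_block !(mul0mx, mulmx0, add0r, addr0) trmxC_block trmxC0.
  case/eq_block_mx=> _ TiS0 _ _; move: TiS0; rewrite -N0 mulmx0 addr0 => TiS0.
  by split=> //; rewrite -[S]mul1mx -(mulmxV unit_T) -mulmxA -TiS0 mulmx0.
rewrite wcm_decomp S0 Ttil_S0 mulmx0 mul0mx; symmetry; apply: mpinv_eq.
rewrite A_decomp S0 N0; split; rewrite -?conjmx_mul ?trmxC_conjmx //.
all: rewrite !mulmx_block !(mul0mx, mulmx0, add0r, addr0) ?mulmxV ?mulVmx ?mul1mx //.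
all: by rewrite trmxC_block trmxC1 !trmxC0.
Qed.

Lemma wcm_eq_drazin m :
  wcm m A = drazin A <-> Tt m *m projP (N ^+ m) = mxpowz T m k *m Tt k.
Proof. by rewrite wcm_decomp drazin_decomp eq_conjmx_block -mulmxA mul_invmx_expr_eq. Qed.

Lemma wcm_eq_coreEP m : wcm m A = coreEP A <-> Tt m *m N ^+ m = 0.
Proof.
rewrite wcm_decomp coreEP_decomp eq_conjmx_block -mulmxA mul_invmx_expr_eq0 //.
exact: mulmx_projP_eq0.
Qed.

Lemma wcm_eq_dmp m :
  wcm m A = dmp A <->
  Tt m *m projP (N ^+ m) = mxpowz T m k *m Tt k *m projP N.
Proof.
by rewrite wcm_decomp dmp_decomp eq_conjmx_block -!mulmxA mul_invmx_expr_eq // !mulmxA.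
Qed.

Lemma wcm_eq_wc m : (0 < m)%N ->
  wcm m A = wc A <-> Tt m *m projP (N ^+ m) = T ^+ m.-1 *m S *m projP N.
Proof.
move=> m_gt0; rewrite wc_wcm1 !wcm_decomp eq_conjmx_block Ttil1 expr1.
rewrite -mulmxA -(mulmxA (Ti ^+ 2)) mul_invmx_expr_eq //.
by rewrite /mxpowz m_gt0 subn1 (mulmxA (T ^+ m.-1)).
Qed.

Lemma wcm_eq_wgm m :
  wcm m A = wgm m A <->
  (forall x : 'cV_s, (N ^+ m)^t* *m x = 0 -> Tt m *m x = 0).
Proof.
rewrite wcm_decomp wgm_decomp eq_conjmx_block -mulmxA -mulmx_projP_id.
by split=> [/(mul_invmx_exprI unit_T) | ->].
Qed.

End CoreEPDecomposition.

Theorem theorem7p1 (t s k m : nat) (A U : 'M[algC]_(t + s))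
  (T : 'M[algC]_t) (S : 'M[algC]_(t, s)) (N : 'M[algC]_s) :
  is_index A k ->
  U \is unitarymx ->
  T \in unitmx ->
  t = \rank (A ^+ k) ->
  nilp_index N k ->
  A = U *m block_mx T S 0 N *m U ^t* ->
  (0 < m)%N ->
  (wcm m A = mpinv A <-> (S = 0 /\ N = 0)) /\
      (wcm m A = drazin A <->
        Ttil T S N m *m projP (N ^+ m) = mxpowz T m k *m Ttil T S N k) /\
      (wcm m A = coreEP A <-> Ttil T S N m *m N ^+ m = 0) /\
      (wcm m A = dmp A <->
        Ttil T S N m *m projP (N ^+ m) = mxpowz T m k *m Ttil T S N k *m projP N) /\
      (wcm m A = wc A <->
        Ttil T S N m *m projP (N ^+ m) = T ^+ m.-1 *m S *m projP N) /\
      (wcm m A = wgm m A <->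
        (forall x : 'cV[algC]_s, (N ^+ m) ^t* *m x = 0 -> Ttil T S N m *m x = 0)).
Proof.
(* Neither the rank of A^k nor the minimality of the nilpotency index is needed. *)
move=> /mxindex_eq index_A unitary_U unit_T _ [N_k _].
rewrite -conjymx // => A_decomp m_gt0.
split; first exact: (wcm_eq_mpinv unitary_U unit_T N_k index_A A_decomp m).
split; first exact: (wcm_eq_drazin unitary_U unit_T N_k index_A A_decomp m).
split; first exact: (wcm_eq_coreEP unitary_U unit_T N_k index_A A_decomp m).
split; first exact: (wcm_eq_dmp unitary_U unit_T N_k index_A A_decomp m).
split; first exact: (wcm_eq_wc unitary_U unit_T N_k index_A A_decomp m_gt0).
exact: (wcm_eq_wgm unitary_U unit_T N_k index_A A_decomp m).
Qed.
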